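(* Let $E$ be a finite directed graph with no sinks. If $F$ is either an out-split or a balanced in-split of $E$, then the adjacency matrices of $E$ and $F$ are unitally shift equivalent.
   Context: A sink is a vertex emitting no edges. A rectangular $\{0,1\}$-matrix $D$ is a division matrix if every row contains at least one $1$ and every column contains exactly one $1$. With $A$ the adjacency matrix of $E$ and $B$ that of $F$: $F$ is an out-split of $E$ if there are a division matrix $D$ and an $\mathbb{N}$-matrix $M$ with $A=DM$, $B=MD$; $F$ is a balanced in-split of $E$ if there are a division matrix $D$ and rectangular $\mathbb{N}$-matrices $R_A,R_B$ with $A=D^tR_A$, $B=D^tR_B$ and $R_AD^t=R_BD^t$. Two square $\mathbb{N}$-matrices $A,B$ are shift equivalent if there are an integer $\ell\ge1$ and rectangular $\mathbb{N}$-matrices $R,S$ with $A^\ell=RS$, $B^\ell=SR$, $AR=RB$, $BS=SA$. Such a shift equivalence $(R,S)$ is unital if there are $m,k\in\mathbb{N}$ with $(B^t)^mR^t\underline{1}=(B^t)^{m+k}\underline{1}$, where $\underline1$ is the all-ones column vector. $A$ and $B$ are unitally shift equivalent if a unital shift equivalence from $A$ to $B$ exists. *)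

(* Graphs are represented by their adjacency matrices over nat. *)
From mathcomp Require Import all_boot all_order all_algebra.
Set Implicit Arguments. Unset Strict Implicit. Unset Printing Implicit Defensive.
Import GRing.Theory.
Local Open Scope ring_scope.

Definition no_sinks (n : nat) (A : 'M[nat]_n) : Prop :=
  forall i : 'I_n, exists j : 'I_n, A i j != 0%N.

Definition division_matrix (p q : nat) (D : 'M[nat]_(p, q)) : Prop :=
  (forall i j, D i j = 0%N \/ D i j = 1%N) /\
  (forall i : 'I_p, exists j : 'I_q, D i j = 1%N) /\
  (forall j : 'I_q, exists! i : 'I_p, D i j = 1%N).

Definition out_split (n m : nat) (A : 'M[nat]_n) (B : 'M[nat]_m) : Prop :=
  exists (D : 'M[nat]_(n, m)) (M : 'M[nat]_(m, n)),
    division_matrix D /\ A = D *m M /\ B = M *m D.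

(* the equations force F to have as many vertices as E *)
Definition balanced_in_split (n : nat) (A B : 'M[nat]_n) : Prop :=
  exists (k : nat) (D : 'M[nat]_(k, n)) (RA RB : 'M[nat]_(k, n)),
    division_matrix D /\ A = D^T *m RA /\ B = D^T *m RB /\
    RA *m D^T = RB *m D^T.

Definition shift_equiv_via (n m : nat) (A : 'M[nat]_n) (B : 'M[nat]_m)
    (R : 'M[nat]_(n, m)) (S : 'M[nat]_(m, n)) : Prop :=
  exists l : nat, (1 <= l)%N /\ A ^+ l = R *m S /\ B ^+ l = S *m R /\
    A *m R = R *m B /\ B *m S = S *m A.

Definition ones (p : nat) : 'cV[nat]_p := const_mx 1%N.

Definition unital_shift_equiv (n m : nat) (A : 'M[nat]_n) (B : 'M[nat]_m) : Prop :=
  exists (R : 'M[nat]_(n, m)) (S : 'M[nat]_(m, n)),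
    shift_equiv_via A B R S /\
    exists p k : nat, (B^T) ^+ p *m (R^T *m ones n) = (B^T) ^+ (p + k) *m ones m.

From mathcomp Require Import all_boot all_order all_algebra.
Set Implicit Arguments. Unset Strict Implicit. Unset Printing Implicit Defensive.
Import GRing.Theory.
Local Open Scope ring_scope.

(* An out-split A = D M, B = M D is an elementary shift equivalence (D, M), and it
   is unital with m = k = 0 because D^T 1 = 1 for a division matrix D.  For a
   balanced in-split, R_A D^T = R_B D^T gives A B = B^2 and B A = A^2, so (B, A)
   is a shift equivalence of lag 2, unital with m = 0, k = 1. *)

Lemma division_matrix_tr_ones (p q : nat) (D : 'M[nat]_(p, q)) :
  division_matrix D -> D^T *m ones p = ones q.
Proof.
move=> [D01 [_ col_unique]]; apply/matrixP => j z; rewrite !mxE.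
have [i0 [Di0 i0_unique]] := col_unique j.
rewrite (bigD1 i0) //= big1 ?mxE ?Di0 // => i ne_i_i0; rewrite !mxE.
have [-> // | Dij] := D01 i j.
by move: ne_i_i0; rewrite (i0_unique i Dij) eqxx.
Qed.

Lemma elementary_shift_equiv (n m : nat) (R : 'M[nat]_(n, m)) (S : 'M[nat]_(m, n)) :
  shift_equiv_via (R *m S) (S *m R) R S.
Proof. by exists 1%N; rewrite !expr1 !mulmxA. Qed.

Lemma out_split_unital_shift_equiv (n m : nat) (A : 'M[nat]_n) (B : 'M[nat]_m) :
  out_split A B -> unital_shift_equiv A B.
Proof.
move=> [D [M [divD [-> ->]]]]; exists D, M; split; first exact: elementary_shift_equiv.
by exists 0%N, 0%N; rewrite !expr0 !mul1mx division_matrix_tr_ones.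
Qed.

Lemma balanced_in_split_mul (n : nat) (A B : 'M[nat]_n) :
  balanced_in_split A B -> A *m B = B *m B /\ B *m A = A *m A.
Proof.
move=> [k [D [RA [RB [_ [-> [-> RD]]]]]]].
by rewrite !mulmxA -!(mulmxA _ _ (D^T)) RD.
Qed.

Lemma balanced_in_split_unital_shift_equiv (n : nat) (A B : 'M[nat]_n) :
  balanced_in_split A B -> unital_shift_equiv A B.
Proof.
move=> /balanced_in_split_mul [AB BA]; exists B, A; split.
  by exists 2%N; rewrite !expr2 -!mulmxE.
by exists 0%N, 1%N; rewrite expr0 expr1 mul1mx.
Qed.

Theorem corollary4p2 (n : nat) (A : 'M[nat]_n) :
  no_sinks A ->
  (forall (m : nat) (B : 'M[nat]_m), out_split A B -> unital_shift_equiv A B) /\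
  (forall B : 'M[nat]_n, balanced_in_split A B -> unital_shift_equiv A B).
Proof.
move=> _; split.
- by move=> m B; apply: out_split_unital_shift_equiv.
- by move=> B; apply: balanced_in_split_unital_shift_equiv.
Qed.
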